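(* For every integer $d>1$ there exist a rational function $r$ of degree $d$ and $2d-2$ distinct points $c_1,\dots,c_{2d-2}\in\mathbb C$ such that $r'(c_j)=0$ and $r(c_j)=\overline{c_j}$ for all $j$. *)

From mathcomp Require Import all_boot all_order all_algebra.
From mathcomp Require Import reals.
From mathcomp.real_closed Require Import complex.
Set Implicit Arguments. Unset Strict Implicit. Unset Printing Implicit Defensive.
Import Order.TTheory GRing.Theory Num.Theory.
Local Open Scope ring_scope.

(* A rational function r is represented by a pair (p, q) of polynomials,
   r = p / q, in lowest terms (coprime) with q <> 0.  Its degree is
   max(deg p, deg q). *)
Definition rat_fun_deg (C : fieldType) (p q : {poly C}) (d : nat) : Prop :=
  [/\ q != 0, coprimep p q & (maxn (size p) (size q)).-1 = d].

(* value of r = p/q at a point c (meaningful when q.[c] != 0) *)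
Definition rat_eval (C : fieldType) (p q : {poly C}) (c : C) : C := p.[c] / q.[c].

Definition rat_deriv_eval (C : fieldType) (p q : {poly C}) (c : C) : C :=
  (p^`() * q - p * q^`()).[c] / (q ^+ 2).[c].

(* For d >= 4 put n := d - 1 and r(z) = (a z^n + b) / (z (b z^n + a)).  The numerator of
   r' at z depends only on u = z^n and is a palindromic quadratic in u, so its roots come in
   pairs u, 1/u.  Taking a = 1 - s^(n+2) and b = s^2 - s^n for some 0 < s < 1 makes
   r(c) = conj c hold for every c with c^n = s^n and |c| = s, and for every c with
   c^n = s^-n and |c| = 1/s; these are the 2n points s w and w / s, w^n = 1.  They are
   critical as soon as s^2 (1 - s^(2n)) = n s^n (1 - s^4), and for n >= 3 such an s exists
   by the intermediate value theorem.  The equation has no solution in (0, 1) when n <= 2,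
   so d = 2 and d = 3 get explicit examples: the Joukowski map (z^2 + 1) / (2z) with the
   points 1, -1, and an odd cubic map over Q(sqrt 3) with the points 1, -1 and
   i (2 + sqrt 3), -i (2 + sqrt 3). *)

From mathcomp Require Import all_boot all_order all_algebra cyclic separable cyclotomic.
From mathcomp Require Import reals.
From mathcomp.real_closed Require Import complex polyrcf.
From mathcomp Require Import ring.
Set Implicit Arguments. Unset Strict Implicit. Unset Printing Implicit Defensive.
Import Order.TTheory GRing.Theory Num.Theory.
Local Open Scope ring_scope.

Definition wronskian (R : nzRingType) (p q : {poly R}) : {poly R} :=
  p^`() * q - p * q^`().

Lemma unity_root_norm1 (C : numDomainType) (n : nat) (z : C) :
  (0 < n)%N -> z ^+ n = 1 -> `|z| = 1.
Proof.
by move=> n_gt0 zn1; apply/eqP; rewrite -(pexpr_eq1 n_gt0) // -normrX zn1 normr1.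
Qed.

Lemma exists_prim_root (C : numClosedFieldType) (n : nat) :
  (0 < n)%N -> exists z : C, n.-primitive_root z.
Proof.
move=> n_gt0; have [r Dp] := closed_field_poly_normal ('X^n - 1 : {poly C}).
rewrite (monicP (monicXnsubC 1 n_gt0)) scale1r in Dp.
have r_roots : all n.-unity_root r by apply/allP=> z; rewrite -root_prod_XsubC -Dp.
have r_size : (n < (size r).+1)%N by rewrite -(size_prod_XsubC r id) -Dp size_XnsubC.
have [|z] := hasP (has_prim_root n_gt0 r_roots _ r_size); last by exists z.
by rewrite -separable_prod_XsubC -Dp separable_Xn_sub_1 // pnatr_eq0 -lt0n.
Qed.

Section ConjCritical.
Variable C : numClosedFieldType.
Implicit Types (p q : {poly C}) (x y z : C).

Definition conj_critical p q x : Prop :=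
  [/\ q.[x] != 0, rat_deriv_eval p q x = 0 & rat_eval p q x = x^*].

Lemma coprimep_conj_critical p q x :
  coprimep p q -> root (wronskian p q) x -> p.[x] = x^* * q.[x] ->
  conj_critical p q x.
Proof.
move=> pq_coprime /eqP Wx0 px; have qx_neq0 : q.[x] != 0.
  apply/negP => /eqP qx0; have := coprimep_root (x := x) pq_coprime.
  by rewrite /root px qx0 mulr0 !eqxx => /(_ isT).
split=> //; first by rewrite /rat_deriv_eval -/(wronskian p q) Wx0 mul0r.
by rewrite /rat_eval px mulfK.
Qed.

(* For y != 0 the x with x^n = y^n and conj x * x = conj y * y are the y w, w^n = 1. *)
Definition conj_critical_orbit p q (n : nat) y : Prop :=
  forall x, x ^+ n = y ^+ n -> x^* * x = y^* * y ->
    root (wronskian p q) x /\ p.[x] = x^* * q.[x].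

Definition conj_critical_witness (d : nat) : Prop :=
  exists p q (c : 'I_(d.*2 - 2) -> C),
    [/\ rat_fun_deg p q d, injective c & forall j, conj_critical p q (c j)].

Definition orbit_pair (n : nat) y1 y2 z (j : nat) : C :=
  if (j < n)%N then y1 * z ^+ j else y2 * z ^+ (j - n).

Section OrbitPair.
Variables (n : nat) (y1 y2 z : C).
Hypotheses (z_prim : n.-primitive_root z) (y1_neq0 : y1 != 0) (y2_neq0 : y2 != 0).

Lemma exp_orbit_point y j : (y * z ^+ j) ^+ n = y ^+ n.
Proof. by rewrite exprMn -exprM mulnC exprM (prim_expr_order z_prim) expr1n mulr1. Qed.

Lemma conj_orbit_point y j : (y * z ^+ j)^* * (y * z ^+ j) = y^* * y.
Proof.
have zz1 : z^* * z = 1.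
  have z_norm1 := unity_root_norm1 (prim_order_gt0 z_prim) (prim_expr_order z_prim).
  by rewrite -normCKC z_norm1 expr1n.
by rewrite rmorphM rmorphXn mulrACA -exprMn zz1 expr1n mulr1.
Qed.

Lemma orbit_pair_inj :
  y1 ^+ n != y2 ^+ n -> {in gtn n.*2 &, injective (orbit_pair n y1 y2 z)}.
Proof.
move=> y12_neq i j; rewrite !inE -!addnn /orbit_pair => ilt jlt.
have pow_inj y k l :
    y != 0 -> (k < n)%N -> (l < n)%N -> y * z ^+ k = y * z ^+ l -> k = l.
  move=> y_neq0 kn ln /(mulfI y_neq0)/eqP.
  by rewrite (eq_prim_root_expr z_prim) !modn_small // => /eqP.
case: (ltnP i n) => [i_n|n_i]; case: (ltnP j n) => [j_n|n_j] Eij.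
- exact: pow_inj Eij.
- by move/(congr1 (fun x => x ^+ n))/eqP: Eij; rewrite !exp_orbit_point (negPf y12_neq).
- by move/(congr1 (fun x => x ^+ n))/eqP: Eij; rewrite !exp_orbit_point eq_sym (negPf y12_neq).
- rewrite -(subnK n_i) -(subnK n_j); congr (_ + _).
  by apply: pow_inj Eij; rewrite ?ltn_subLR.
Qed.

End OrbitPair.

Lemma conj_critical_witness_of_orbits p q (n : nat) y1 y2 z :
  n.-primitive_root z -> y1 != 0 -> y2 != 0 -> y1 ^+ n != y2 ^+ n ->
  rat_fun_deg p q n.+1 ->
  conj_critical_orbit p q n y1 -> conj_critical_orbit p q n y2 ->
  conj_critical_witness n.+1.
Proof.
move=> z_prim y1_neq0 y2_neq0 y12_neq deg_pq crit1 crit2.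
have [_ pq_coprime _] := deg_pq.
have num_points : (n.+1.*2 - 2 = n.*2)%N by rewrite doubleS !subSS subn0.
exists p, q, (fun j : 'I_(n.+1.*2 - 2) => orbit_pair n y1 y2 z j); split=> //.
  move=> i j /(orbit_pair_inj z_prim y1_neq0 y2_neq0 y12_neq) Eij.
  by apply/val_inj/Eij; rewrite inE -num_points.
move=> j; set x := orbit_pair n y1 y2 z j.
have [Wx0 px] : root (wronskian p q) x /\ p.[x] = x^* * q.[x].
  rewrite /x /orbit_pair; case: ifP => _; [apply: crit1 | apply: crit2];
    by rewrite ?(exp_orbit_point z_prim) ?(conj_orbit_point z_prim).
exact: coprimep_conj_critical.
Qed.

End ConjCritical.

Section Degree2.
Variable C : numClosedFieldType.

Definition joukowski_num : {poly C} := 'X^2 + 1.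
Definition joukowski_den : {poly C} := 2 *: 'X.

Lemma horner_wronskian_joukowski (x : C) :
  (wronskian joukowski_num joukowski_den).[x] = (x ^+ 2 - 1) *+ 2.
Proof.
rewrite /wronskian /joukowski_num /joukowski_den !derivE !hornerE /=; ring.
Qed.

Lemma joukowski_conj_critical_witness : conj_critical_witness C 2.
Proof.
have [z z_prim] := @exists_prim_root C 1 isT.
have two_neq0 : (2 : C) != 0 by rewrite pnatr_eq0.
have deg : rat_fun_deg joukowski_num joukowski_den 2.
  rewrite /joukowski_num /joukowski_den; split.
  - by rewrite scaler_eq0 negb_or two_neq0 polyX_eq0.
  - by rewrite coprimepZr // coprimepX /root !hornerE expr0n /= add0r oner_eq0.
  - by rewrite size_scale // size_polyX size_polyDl ?size_polyXn ?size_polyC ?oner_neq0.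
have crit (y : C) :
    y ^+ 2 = 1 -> y^* = y -> conj_critical_orbit joukowski_num joukowski_den 1 y.
  move=> y2 yreal x; rewrite !expr1 => -> _; split.
    by rewrite /root horner_wronskian_joukowski y2 subrr mul0rn.
  by rewrite /joukowski_num /joukowski_den !hornerE /= yreal mulrAC -expr2 y2 mul1r.
apply: (conj_critical_witness_of_orbits (y1 := 1) (y2 := -1) z_prim _ _ _ deg).
- exact: oner_neq0.
- by rewrite oppr_eq0 oner_eq0.
- by rewrite !expr1 -subr_eq0 opprK.
- by apply: crit; rewrite ?expr1n ?rmorph1.
- by apply: crit; rewrite ?sqrrN ?expr1n // rmorphN rmorph1.
Qed.
End Degree2.

Section Degree3.
Variable C : numClosedFieldType.

Let S : C := sqrtC 3.
Let K : C := 2 + S.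

(* Among odd maps z (alpha z^2 + beta) / (z^2 + delta) with conjugate-critical points
   1, -1, i y, -i y, the four conditions force alpha^2 = 1/3. *)
Definition cubic_num : {poly C} := - S *: 'X^3 + (3 * K) *: 'X.
Definition cubic_den : {poly C} := 3 *: 'X^2 + (3 + 2 * S)%:P.
Definition cubic_crit (w : C) : C :=
  (3 * K - 3 * S * w) * (3 * w + 3 + 2 * S) - 6 * w * (3 * K - S * w).

Lemma horner_cubic_num x : cubic_num.[x] = x * (3 * K - S * x ^+ 2).
Proof. by rewrite /cubic_num !hornerE /=; ring. Qed.

Lemma horner_cubic_den x : cubic_den.[x] = 3 * x ^+ 2 + 3 + 2 * S.
Proof. by rewrite /cubic_den !hornerE /=; ring. Qed.

Lemma horner_wronskian_cubic x :
  (wronskian cubic_num cubic_den).[x] = cubic_crit (x ^+ 2).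
Proof.
by rewrite /wronskian /cubic_num /cubic_den !derivE !hornerE /cubic_crit /=; ring.
Qed.

Lemma cubic_conj_critical_orbit y :
  y != 0 -> cubic_crit (y ^+ 2) = 0 ->
  y ^+ 2 * (3 * K - S * y ^+ 2) = y^* * y * (3 * y ^+ 2 + 3 + 2 * S) ->
  conj_critical_orbit cubic_num cubic_den 2 y.
Proof.
move=> y_neq0 crit_y conj_y x x2 xx; split.
  by rewrite /root horner_wronskian_cubic x2 crit_y.
have x_neq0 : x != 0 by apply: contraNneq (expf_neq0 2 y_neq0) => x0; rewrite -x2 x0 expr0n.
apply: (mulfI x_neq0); rewrite horner_cubic_num horner_cubic_den mulrA -expr2 x2 conj_y.
by rewrite -xx; ring.
Qed.

Lemma cubic_conj_critical_witness : conj_critical_witness C 3.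
Proof.
have S2 : S ^+ 2 = 3 by rewrite sqrtCK.
have S_gt0 : 0 < S by rewrite sqrtC_gt0 ltr0n.
have K_gt0 : 0 < K by rewrite addr_gt0 ?ltr0n.
have [z z_prim] := @exists_prim_root C 2 isT.
have den0_gt0 : 0 < 3 + 2 * S by rewrite addr_gt0 ?mulr_gt0 ?ltr0n.
have size_num : size cubic_num = 4%N.
  by rewrite /cubic_num size_polyDl !size_scale ?oppr_eq0 ?gt_eqF ?mulr_gt0 ?ltr0n
    ?size_polyXn ?size_polyX.
have size_den : size cubic_den = 3%N.
  rewrite /cubic_den size_polyDl size_scale ?pnatr_eq0 ?size_polyXn //.
  exact: leq_ltn_trans (size_polyC_leq1 _) _.
have deg : rat_fun_deg cubic_num cubic_den 3.
  split; last by rewrite size_num size_den.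
    by rewrite -size_poly_eq0 size_den.
  apply/Pdiv.ClosedField.coprimepP => x; rewrite /root horner_cubic_num horner_cubic_den.
  rewrite mulf_eq0 => /orP[/eqP -> | ]; first by rewrite expr0n mulr0 add0r gt_eqF.
  rewrite subr_eq0 => /eqP K3; apply: contra_neq (_ : 12 * K != 0) => [den0|].
    transitivity (3 * (S * x ^+ 2) + 3 * S + 2 * S ^+ 2); first by rewrite -K3 S2 /K; ring.
    by rewrite -(mulr0 S) -den0; ring.
  by rewrite mulf_neq0 ?pnatr_eq0 ?gt_eqF.
have iK2 : ('i * K) ^+ 2 = - K ^+ 2 by rewrite exprMn sqrCi mulN1r.
apply: (conj_critical_witness_of_orbits (y1 := 1) (y2 := 'i * K) z_prim _ _ _ deg).
- exact: oner_neq0.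
- by rewrite mulf_neq0 ?neq0Ci ?gt_eqF.
- by rewrite iK2 expr1n -subr_eq0 opprK gt_eqF // addr_gt0 ?exprn_gt0.
- apply: cubic_conj_critical_orbit; rewrite ?oner_neq0 ?expr1n ?rmorph1 /cubic_crit /K; ring.
- apply: cubic_conj_critical_orbit; first by rewrite mulf_neq0 ?neq0Ci ?gt_eqF.
    rewrite iK2; have -> : cubic_crit (- K ^+ 2) =
      (S ^+ 2 - 3) * (-30 - 39 * S - 18 * S ^+ 2 - 3 * S ^+ 3) by rewrite /cubic_crit /K; ring.
    by rewrite S2 subrr mul0r.
  rewrite iK2 rmorphM /= conjCi (conj_Creal (gtr0_real K_gt0)).
  have -> : - 'i * K * ('i * K) = K ^+ 2.
    by rewrite mulrACA mulNr -expr2 sqrCi opprK mul1r expr2.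
  apply/eqP; rewrite -subr_eq0; apply/eqP.
  transitivity (K ^+ 2 * (S ^+ 2 - 3) * (- 1 - S)); first by rewrite /K; ring.
  by rewrite S2 subrr mulr0 mul0r.
Qed.
End Degree3.

Section Family.
Variables (F : fieldType) (n : nat) (a b : F).

Definition family_num : {poly F} := a *: 'X^n + b%:P.
Definition family_den : {poly F} := b *: 'X^(n.+1) + a *: 'X.
Definition family_crit (u : F) : F :=
  n%:R * a * u * (b * u + a) - (a * u + b) * (n.+1%:R * b * u + a).

Lemma horner_family_num x : family_num.[x] = a * x ^+ n + b.
Proof. by rewrite /family_num !hornerE. Qed.

Lemma horner_family_den x : family_den.[x] = x * (b * x ^+ n + a).
Proof. by rewrite /family_den !hornerE exprSr /=; ring. Qed.

Lemma horner_wronskian_family x :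
  (0 < n)%N -> (wronskian family_num family_den).[x] = family_crit (x ^+ n).
Proof.
move=> n_gt0; have xn : x ^+ n = x ^+ n.-1 * x by rewrite -exprSr prednK.
rewrite /wronskian /family_num /family_den !derivE !(hornerE, hornerMn) /family_crit /=.
by rewrite xn exprSr xn; ring.
Qed.

Lemma family_crit_inv u : u != 0 -> family_crit u^-1 = u ^- 2 * family_crit u.
Proof. by move=> u_neq0; rewrite /family_crit; field. Qed.

Lemma size_family_num : a != 0 -> (0 < n)%N -> size family_num = n.+1.
Proof.
move=> a_neq0 n_gt0; rewrite /family_num size_polyDl (size_scale _ a_neq0) size_polyXn //.
exact: leq_ltn_trans (size_polyC_leq1 _) _.
Qed.

Lemma size_family_den : b != 0 -> (0 < n)%N -> size family_den = n.+2.
Proof.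
move=> b_neq0 n_gt0; rewrite /family_den size_polyDl (size_scale _ b_neq0) size_polyXn //.
by rewrite (leq_ltn_trans (size_scale_leq _ _)) // size_polyX ltnS.
Qed.

End Family.

Lemma coprimep_family (F : closedFieldType) (n : nat) (a b : F) :
  (0 < n)%N -> b != 0 -> a ^+ 2 != b ^+ 2 -> coprimep (family_num n a b) (family_den n a b).
Proof.
move=> n_gt0 b_neq0 ab_neq; apply/Pdiv.ClosedField.coprimepP => x.
rewrite /root horner_family_num horner_family_den => /eqP px0; rewrite mulf_neq0 //.
  by apply: contra_eq_neq px0 => ->; rewrite expr0n gtn_eqF // mulr0 add0r.
apply: contra_neq ab_neq => qx0.
transitivity (a * (b * x ^+ n + a) + b ^+ 2 - b * (a * x ^+ n + b)); first by ring.
by rewrite qx0 px0; ring.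
Qed.

Section FamilyWitness.
Variables (C : numClosedFieldType) (n : nat) (s : C).
Hypotheses (n_gt2 : (2 < n)%N) (s_gt0 : 0 < s) (s_lt1 : s < 1).
Hypothesis s_crit : s ^+ 2 * (1 - s ^+ (2 * n)) = n%:R * s ^+ n * (1 - s ^+ 4).

(* a W + b = s^2 (b W + a), i.e. r(x) = conj x on both circles |x| = s and |x| = 1/s;
   family_crit W factors as (1 - W^2) times a term that vanishes by [s_crit]. *)
Let W := s ^+ n.
Let a := 1 - s ^+ 2 * W.
Let b := s ^+ 2 - W.

Lemma family_conj_critical_witness : conj_critical_witness C n.+1.
Proof.
have n_gt0 : (0 < n)%N by apply: ltn_trans n_gt2.
have s_neq0 : s != 0 by rewrite gt_eqF.
have s_real : s^* = s by rewrite conj_Creal ?gtr0_real.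
have pow_neq1 k : (0 < k)%N -> s ^+ k != 1.
  by move=> k_gt0; rewrite ieexprn_weq1 ?ltW // (lt_eqF s_lt1) orbF -lt0n.
have W_neq0 : W != 0 by rewrite expf_neq0.
have W2_neq1 : W ^+ 2 != 1 by rewrite -exprM pow_neq1 // muln_gt0 n_gt0.
have a_neq0 : a != 0 by rewrite /a -exprD subr_eq0 eq_sym pow_neq1.
have b_neq0 : b != 0.
  by rewrite /b subr_eq0 (inj_eq (ieexprIn s_gt0 (negbT (lt_eqF s_lt1)))) ltn_eqF.
have ab_neq : a ^+ 2 != b ^+ 2.
  rewrite -subr_eq0; have -> : a ^+ 2 - b ^+ 2 = (1 - s ^+ 4) * (1 - W ^+ 2).
    by rewrite /a /b; ring.
  by rewrite mulf_neq0 // subr_eq0 eq_sym ?pow_neq1.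
have crit_W : family_crit n a b W = 0.
  transitivity ((1 - W ^+ 2) * (n%:R * W * (1 - s ^+ 4) - s ^+ 2 * (1 - W ^+ 2))).
    by rewrite /family_crit /a /b; ring.
  by rewrite -exprM mulnC -s_crit subrr mulr0.
have [z z_prim] := exists_prim_root C n_gt0.
apply: (conj_critical_witness_of_orbits (p := family_num n a b) (q := family_den n a b)
  (y1 := s) (y2 := s^-1) z_prim) => //.
- by rewrite invr_neq0.
- rewrite exprVn -/W; apply: contra_neq W2_neq1 => W_inv.
  by rewrite expr2 {2}W_inv divff.
- split; last by rewrite size_family_num ?size_family_den // (maxn_idPr (leqnSn _)).
    by rewrite -size_poly_eq0 size_family_den.
  exact: coprimep_family.
- move=> x xn xx; split; first by rewrite /root horner_wronskian_family // xn crit_W.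
  by rewrite horner_family_num horner_family_den xn mulrA xx s_real /a /b /W; ring.
- move=> x; rewrite exprVn => xn xx; split.
    by rewrite /root horner_wronskian_family // xn family_crit_inv // crit_W mulr0.
  rewrite horner_family_num horner_family_den xn mulrA xx fmorphV /= s_real /a /b /W.
  by field; rewrite expf_neq0 s_neq0.
Qed.

End FamilyWitness.

Lemma exists_family_param (R : rcfType) (n : nat) : (2 < n)%N ->
  exists2 s : R, 0 < s < 1 & s ^+ 2 * (1 - s ^+ (2 * n)) = n%:R * s ^+ n * (1 - s ^+ 4).
Proof.
case: n => [|[|[|m]]] // _; set n := m.+3.
(* The equation divided by s^2 (1 - s^2); K(0) = 1 and K(1) = -n. *)
pose K : {poly R} := \sum_(k < n) ('X ^+ 2) ^+ k - n%:R *: ('X ^+ m.+1 + 'X ^+ n).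
have hornerK x : K.[x] = \sum_(k < n) (x ^+ 2) ^+ k - n%:R * (x ^+ m.+1 + x ^+ n).
  by rewrite /K !hornerE horner_sum; congr (_ - _); apply: eq_bigr => k _; rewrite !hornerE.
have K0 : K.[0] = 1.
  rewrite hornerK big_ord_recl big1 => [|k _]; last by rewrite expr0n /= expr0n.
  by rewrite !expr0n /=; ring.
have K1 : K.[1] = - n%:R.
  rewrite hornerK (eq_bigr (fun _ => 1)) => [|k _]; last by rewrite !expr1n.
  by rewrite sumr_const card_ord !expr1n; ring.
have [s /andP[s_gt0 s_lt1]] : {x : R | x \in `]0, 1[ & root K x}.
  by apply: poly_ivtoo => //; rewrite K0 K1 mul1r oppr_lt0 ltr0n.
rewrite /root hornerK subr_eq0 => /eqP Ks; exists s; first by apply/andP.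
have geom : 1 - s ^+ (2 * n) = (1 - s ^+ 2) * \sum_(k < n) (s ^+ 2) ^+ k.
  by rewrite exprM -opprB subrX1 -mulNr opprB.
by rewrite geom Ks /n !exprS; ring.
Qed.

Theorem theorem6p6 (R : realType) (d : nat) (hd : (1 < d)%N) :
  exists (p q : {poly R[i]}) (c : 'I_(d.*2 - 2) -> R[i]),
    [/\ rat_fun_deg p q d,
        injective c &
        forall j : 'I_(d.*2 - 2),
          [/\ q.[c j] != 0,
              rat_deriv_eval p q (c j) = 0 &
              rat_eval p q (c j) = conjc (c j)]].
Proof.
suff : conj_critical_witness R[i] d by [].
case: d hd => [|[|[|[|m]]]] // _.
- exact: joukowski_conj_critical_witness.
- exact: cubic_conj_critical_witness.
have [s /andP[s_gt0 s_lt1] s_crit] := @exists_family_param R m.+3 isT.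
apply: (@family_conj_critical_witness _ _ (s%:C)%C); rewrite ?ltcR //.
have := congr1 (real_complex R) s_crit.
by rewrite !(rmorphXn, rmorphM, rmorphB, rmorph1, rmorph_nat).
Qed.
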